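(* Let $\mathcal{G}=(G,\lambda)$ be a simple temporal clique, $G=(V,E)$, and let $\mathcal{T}^+=(V,E^+_T)$ be obtained by the backward construction. Then the backward fireworks cover $S^+_T=\{\{u,v\}\in E:(u,v)\in E^+_T\}\cup\{\{u,v\}\in E: u \text{ is a collector}\}$ is a temporal spanner of $\mathcal{G}$.
   Context: A simple temporal clique is a pair $\mathcal{G}=(G,\lambda)$ where $G=(V,E)$ is the complete graph on a finite vertex set $V$ and $\lambda:E\to\mathbb{N}$ assigns to each edge a single integer label such that any two distinct edges sharing an endpoint have different labels; the label of an arc $(x,y)$ is $\lambda(\{x,y\})$. A journey from $x$ to $y$ is a sequence of vertices $x=u_0,\dots,u_k=y$ ($k\ge1$) with $\lambda(\{u_{i-1},u_i\})<\lambda(\{u_i,u_{i+1}\})$ for $1\le i<k$. A set $E'\subseteq E$ is a temporal spanner of $\mathcal{G}$ if for every ordered pair of distinct vertices $x,y$ there is a journey from $x$ to $y$ using only edges of $E'$. For a vertex $v$, $e^+(v)$ is the edge incident to $v$ with largest label. Backward construction: let $E^+$ be the set of arcs $(v,u)$ with $\{u,v\}=e^+(v)$, except that if $e^+(u)=e^+(v)=\{u,v\}$ only one of the two arcs $(u,v),(v,u)$ is included (arbitrarily). Initialize $E^+_T:=E^+$. For every vertex $v$ of in-degree at least $2$ in $(V,E^+)$, let $(u_1,v),\dots,(u_\ell,v)$ be its in-arcs in $E^+$, where $(u_\ell,v)$ has the smallest label; for each $i<\ell$, if $u_i$ has in-degree $0$ in $(V,E^+)$, replace $(u_i,v)$ by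 $(v,u_i)$ in $E^+_T$, and otherwise remove $(u_i,v)$ from $E^+_T$. Set $\mathcal{T}^+=(V,E^+_T)$. A collector is a vertex of in-degree $0$ in $\mathcal{T}^+$. *)

From mathcomp Require Import all_boot.
Set Implicit Arguments. Unset Strict Implicit. Unset Printing Implicit Defensive.

(* A temporal clique on the finite vertex type V: every pair of distinct
   vertices {x,y} is an edge, with label lam x y (lam must be symmetric). *)
Section TemporalClique.
Variables (V : finType) (lam : V -> V -> nat).

Definition simple_temporal_clique : Prop :=
  (forall x y, lam x y = lam y x) /\
  (forall x y z, x != y -> x != z -> y != z -> lam x y != lam x z).

(* top v u : {v,u} is e^+(v), the edge at v with largest label *)
Definition top (v u : V) : bool :=
  (u != v) && [forall w, (w != v) ==> (lam v w <= lam v u)].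

(* E^+ : arcs (v,u) with {u,v} = e^+(v); when e^+(u) = e^+(v) = {u,v}
   the arbitrary orientation is chosen by [pick] (pick x y = arc (x,y) kept) *)
Definition Eplus (pick : V -> V -> bool) (v u : V) : bool :=
  top v u && (~~ top u v || pick v u).

Definition indeg (A : rel V) (v : V) : nat := #|[set u | A u v]|.

Definition min_in (A : rel V) (u v : V) : bool :=
  A u v && [forall w, A w v ==> (lam u v <= lam w v)].

Definition ETplus (pick : V -> V -> bool) (x y : V) : bool :=
  let A := Eplus pick in
  (A x y && ((indeg A y < 2) || min_in A x y))
  || [&& A y x, 2 <= indeg A x, ~~ min_in A y x & indeg A y == 0].

Definition collector (pick : V -> V -> bool) (v : V) : bool :=
  [forall x, ~~ ETplus pick x v].

(* the backward fireworks cover S^+_T, as a symmetric relation on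
   distinct vertices (an edge {u,v}) *)
Definition Splus (pick : V -> V -> bool) (u v : V) : bool :=
  (u != v) &&
  [|| ETplus pick u v, ETplus pick v u, collector pick u | collector pick v].

(* journey from x to y using only edges in S: x = u_0, s = [u_1;...;u_k],
   k >= 1, consecutive vertices distinct and forming edges in S, labels
   strictly increasing *)
Definition journey (S : rel V) (x y : V) (s : seq V) : Prop :=
  [/\ 0 < size s, last x s = y,
      path (fun a b => (a != b) && S a b) x s &
      sorted ltn [seq lam p.1 p.2 | p <- zip (x :: s) s]].

Definition temporal_spanner (S : rel V) : Prop :=
  forall x y : V, x != y -> exists s, journey S x y s.

End TemporalClique.

From mathcomp Require Import all_boot.

Set Implicit Arguments.
Unset Strict Implicit.
Unset Printing Implicit Defensive.

(* Call an arc of E^+ kept if it survives unreversed in T^+.  Claim: if (p,v)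
   is kept, every x <> v reaches v by a journey in S^+_T whose last label is
   at most lambda(p,v).  By induction on lambda(p,v): x reaches p directly if p
   is a collector, with a label below lambda(p,v) because {p,v} = e^+(p);
   otherwise p has a kept in-arc (q,p) (a reversed arc into p could only come
   from e^+(p) = {p,v}, which would prevent (p,v) from being kept), and
   lambda(q,p) < lambda(p,v) since {p,v} = e^+(p).  A non-collector target y
   has an in-arc in T^+: either kept, and the claim applies, or reversed from
   some p, and then the journey goes through the minimal in-arc (m,p) of p in
   E^+, which is kept and has a smaller label than {p,y}. *)

Section Journeys.
Variables (V : finType) (lam : V -> V -> nat) (S : rel V).

Definition labels (x : V) (s : seq V) : seq nat :=
  [seq lam p.1 p.2 | p <- zip (x :: s) s].

Lemma labels_rcons x s q :
  labels x (rcons s q) = rcons (labels x s) (lam (last x s) q).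
Proof. by elim: s x => [|a s IHs] x //=; rewrite -IHs. Qed.

Definition arrives_before (x v : V) (t : nat) : Prop :=
  exists2 s, journey lam S x v s & last 0 (labels x s) < t.

Lemma arrives_before_edge x v t :
  x != v -> S x v -> lam x v < t -> arrives_before x v t.
Proof.
by move=> xv Sxv lt_t; exists [:: v]; first split=> //=; rewrite ?xv ?Sxv.
Qed.

Lemma arrives_before_rcons x p q t :
  arrives_before x p (lam p q) -> p != q -> S p q -> lam p q < t ->
  arrives_before x q t.
Proof.
case=> s [s_gt0 last_s path_s sorted_s] lt_s pq Spq lt_t.
exists (rcons s q); last by rewrite labels_rcons last_rcons last_s.
split; rewrite ?size_rcons ?last_rcons //.
  by rewrite rcons_path path_s last_s pq Spq.
change (sorted ltn (labels x (rcons s q))); rewrite labels_rcons last_s.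
move: sorted_s lt_s; rewrite -/(labels x s).
by case: s s_gt0 {last_s path_s} => [|a s] //= _; rewrite rcons_path => ->.
Qed.

End Journeys.

Section BackwardConstruction.
Variables (V : finType) (lam : V -> V -> nat) (pick : V -> V -> bool).
Hypothesis lam_sym : forall x y, lam x y = lam y x.
Hypothesis lam_inj :
  forall {x y z : V}, x != y -> x != z -> y != z -> lam x y != lam x z.
Hypothesis pick_asym : forall {x y : V}, x != y -> pick x y != pick y x.

Local Notation Aplus := (Eplus lam pick).
Local Notation Splus := (Splus lam pick).
Local Notation collector := (collector lam pick).

Definition kept_arc (v w : V) : bool :=
  Aplus v w && ((indeg Aplus w < 2) || min_in lam Aplus v w).

Lemma top_uniq {v a b} : top lam v a -> top lam v b -> a = b.
Proof.
move=> /andP[av /forallP top_a] /andP[bv /forallP top_b].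
apply/eqP/negPn/negP => ab.
have va : v != a by rewrite eq_sym.
have vb : v != b by rewrite eq_sym.
move: (lam_inj va vb ab).
by rewrite eqn_leq (implyP (top_a b) bv) (implyP (top_b a) av).
Qed.

Lemma top_lt v w x : top lam v w -> x != v -> x != w -> lam v x < lam v w.
Proof.
move=> /andP[wv /forallP top_w] xv xw.
by rewrite ltn_neqAle (implyP (top_w x) xv) lam_inj // eq_sym.
Qed.

Lemma Eplus_neq a b : Aplus a b -> a != b.
Proof. by case/andP=> /andP[ba _] _; rewrite eq_sym. Qed.

Lemma Eplus_asym a b : Aplus a b -> ~~ Aplus b a.
Proof.
case/andP=> tab pab; apply/negP=> /andP[tba pba].
have ab : a != b by case/andP: tba.
rewrite tba /= in pab; rewrite tab /= in pba.
by have := pick_asym ab; rewrite pab pba.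
Qed.

Lemma Eplus_chain_lt p v w : Aplus p v -> Aplus v w -> lam p v < lam v w.
Proof.
move=> Apv Avw; rewrite lam_sym; apply: top_lt.
- by case/andP: Avw.
- exact: Eplus_neq.
- by apply: contraTneq Apv => ->; exact: Eplus_asym.
Qed.

Lemma ETplus_Splus a b : a != b -> ETplus lam pick a b -> Splus a b.
Proof. by move=> ab Tab; rewrite /Splus ab Tab. Qed.

Lemma kept_Splus a b : kept_arc a b -> Splus a b.
Proof.
move=> kab; apply: ETplus_Splus; last by apply/orP; left.
by case/andP: kab => /Eplus_neq.
Qed.

Lemma collector_Splus a b : a != b -> collector b -> Splus a b.
Proof. by move=> ab col_b; rewrite /Splus ab col_b !orbT. Qed.

Lemma ETplus_cases u v :
  ETplus lam pick u v ->
  kept_arc u v \/ [/\ Aplus v u, 1 < indeg Aplus u & ~~ min_in lam Aplus v u].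
Proof. by case/orP=> [|/and4P[]]; [left | right]. Qed.

Lemma kept_in_arc p v :
  kept_arc p v -> ~~ collector p -> exists q, kept_arc q p.
Proof.
move=> /andP[Apv kept_pv] /forallPn[q].
rewrite negbK => /ETplus_cases[kqp|[Apq two_in not_min]]; first by exists q.
have eq_vq : v = q := top_uniq (andP Apv).1 (andP Apq).1.
by move: kept_pv; rewrite eq_vq ltnNge two_in (negbTE not_min).
Qed.

Lemma not_min_in_kept y p :
  Aplus y p -> ~~ min_in lam Aplus y p ->
  exists2 m, kept_arc m p & lam m p < lam y p.
Proof.
move=> Ayp not_min.
have [m Amp min_m] := @arg_minnP _ y (Aplus^~ p) (lam^~ p) Ayp.
have min_in_m : min_in lam Aplus m p.
  by rewrite /min_in Amp; apply/forallP=> u; apply/implyP; apply: min_m.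
exists m; first by rewrite /kept_arc Amp min_in_m orbT.
have my : m != y by apply: contraNneq _ not_min => <-.
rewrite ltn_neqAle min_m // andbT (lam_sym m) (lam_sym y).
by rewrite lam_inj // eq_sym Eplus_neq.
Qed.

Lemma kept_arrives_before p v x t :
  kept_arc p v -> x != v -> lam p v < t -> arrives_before lam Splus x v t.
Proof.
have [n] := ubnP (lam p v); elim: n => // n IHn in p v x t *.
rewrite ltnS => le_pv_n kpv xv lt_pv_t.
have Apv : Aplus p v by case/andP: kpv.
have [->|xp] := eqVneq x p.
  exact: arrives_before_edge (Eplus_neq Apv) (kept_Splus kpv) lt_pv_t.
apply: arrives_before_rcons _ (Eplus_neq Apv) (kept_Splus kpv) lt_pv_t.
have [col_p|/(kept_in_arc kpv)[q kqp]] := boolP (collector p).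
  apply: (arrives_before_edge xp (collector_Splus xp col_p)).
  by case/andP: Apv => tpv _; rewrite lam_sym top_lt.
have lt_qp_pv := Eplus_chain_lt (andP kqp).1 Apv.
exact: IHn (leq_trans lt_qp_pv le_pv_n) kqp xp lt_qp_pv.
Qed.

End BackwardConstruction.

Theorem theorem4 (V : finType) (lam : V -> V -> nat)
  (Hclique : simple_temporal_clique lam)
  (pick : V -> V -> bool)
  (Hpick : forall x y : V, x != y -> pick x y != pick y x) :
  temporal_spanner lam (Splus lam pick).
Proof.
case: Hclique => lam_sym lam_inj x y xy.
suff [t [s journey_s _]] : exists t, arrives_before lam (Splus lam pick) x y t.
  by exists s.
have [col_y|/forallPn[p]] := boolP (collector lam pick y).
  exists (lam x y).+1.
  exact: (arrives_before_edge xy (collector_Splus xy col_y) (ltnSn _)).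
rewrite negbK => Tpy; exists (lam p y).+1.
case: (ETplus_cases Tpy) => [kpy|[Ayp _ not_min]].
  exact: (kept_arrives_before lam_sym lam_inj Hpick kpy xy (ltnSn _)).
have [m kmp lt_mp] := not_min_in_kept lam_sym lam_inj Ayp not_min.
have py : p != y by rewrite eq_sym (Eplus_neq Ayp).
have Spy := ETplus_Splus py Tpy.
have [->|xp] := eqVneq x p.
  exact: (arrives_before_edge py Spy (ltnSn _)).
apply: arrives_before_rcons _ py Spy (ltnSn _).
apply: (kept_arrives_before lam_sym lam_inj Hpick kmp xp).
by rewrite (lam_sym p).
Qed.
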